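(* Let $(\Omega,\Sigma,\mu)$ be any measure space and $1<p<\infty$. Let $(f_n)$ be a pairwise disjoint sequence in the unit ball of $L^{p,\infty}(\Omega,\Sigma,\mu)$ (with respect to the quasi-norm below), and let $(M_n)$ be a real sequence with $1<M_n\le 2^{-1/p}M_{n+1}$ for all $n\in\mathbb N$. Define $g_1=(f_1)_{M_1}$ and $g_{n+1}=(f_{n+1})_{M_{n+1}}-(f_{n+1})_{M_n}$ for $n\ge1$. Then $\sup_k\big\|\sum_{n=1}^k g_n\big\|\le 4$.
   Context: $L^{p,\infty}(\Omega,\Sigma,\mu)$ is the space of (equivalence classes of) measurable $f$ with $\|f\|=\sup_{c>0}c\,(\mu\{|f|>c\})^{1/p}<\infty$; $\|\cdot\|$ denotes this quasi-norm. For a real-valued function $f$ and $1<M<\infty$, $(f)_M=f\chi_{\{M^{-1}<|f|<M\}}$. Functions $f,g$ are disjoint if $|f|\wedge|g|=0$. *)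

From HB Require Import structures.
From mathcomp Require Import all_boot all_order all_algebra.
From mathcomp Require Import all_classical all_reals all_analysis.
Set Implicit Arguments. Unset Strict Implicit. Unset Printing Implicit Defensive.
Import Order.TTheory GRing.Theory Num.Theory.
Local Open Scope classical_set_scope.
Local Open Scope ring_scope.

Definition weakLnorm {d : measure_display} {T : measurableType d} {R : realType}
  (mu : {measure set T -> \bar R}) (p : R) (f : T -> R) : \bar R :=
  ereal_sup [set (c%:E * poweR (mu [set x | (c < `|f x|)%R]) p^-1)%E
            | c in [set c : R | 0 < c]].

Definition trunc {T : Type} {R : realType} (f : T -> R) (M : R) : T -> R :=
  fun x => if (M^-1 < `|f x| < M) then f x else 0.

(* the functions g_n of the statement, 0-indexed: gseq 0 = (f 0)_{M 0},
   gseq (n+1) = (f (n+1))_{M (n+1)} - (f (n+1))_{M n} *)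
Definition gseq {T : Type} {R : realType} (f : nat -> T -> R) (M : nat -> R)
  (n : nat) : T -> R :=
  match n with
  | 0 => trunc (f 0%N) (M 0%N)
  | m.+1 => fun x => trunc (f m.+1) (M m.+1) x - trunc (f m.+1) (M m) x
  end.

From HB Require Import structures.
From mathcomp Require Import all_boot all_order all_algebra.
From mathcomp Require Import all_classical all_reals all_analysis.
From mathcomp Require Import lra.
Set Implicit Arguments. Unset Strict Implicit. Unset Printing Implicit Defensive.
Import Order.TTheory GRing.Theory Num.Theory.
Local Open Scope classical_set_scope.
Local Open Scope ring_scope.

(* Fix a level c > 0 and put C = c^p, P_n = M_n^p, so that P_(n+1) >= 2 P_n.
   Where the f_n are disjoint at most one g_n is nonzero, so {|g_1 + ... + g_k| > c}
   is covered, up to a null set, by the sets {|g_n| > c}.  Their measures a_n obey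
   four estimates coming from ||f_n|| <= 1 and the truncation windows:
   C a_n <= 1; a_n <= P_n, as |f_n| > 1/M_n there; a_(n+1) <= 1/P_n once c M_n >= 1,
   as then |f_(n+1)| >= M_n there; and a_n = 0 once M_n <= c.  Geometric sums of the
   doubling sequences C P_n and C/P_n then give C (a_1 + ... + a_k) <= 4, that is
   c mu{|g_1 + ... + g_k| > c}^(1/p) <= 4^(1/p) <= 4. *)

Section DoublingSums.
Variable R : realFieldType.

Lemma sum_below_doubling (a : nat -> R) (th : R) k : 0 <= th ->
  (forall n, 0 <= a n) -> (forall n, 2 * a n <= a n.+1) ->
  \sum_(n < k) (if a n < th then a n else 0) <= 2 * th.
Proof.
move=> th0 a0 a2.
have partial j : \sum_(n < j.+1) (if a n < th then a n else 0) <=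
    2 * (if a j < th then a j else th).
  elim: j => [|j IH].
    by rewrite big_ord_recr big_ord0 /= add0r; have := a0 0%N; case: ifP; lra.
  rewrite big_ord_recr /=; have := a2 j; have := a0 j.
  by move: IH; do 2 case: ifP => ? /=; lra.
case: k => [|k]; first by rewrite big_ord0; lra.
by apply: le_trans (partial k) _; case: ifP; lra.
Qed.

Lemma sum_below_halving (a : nat -> R) (th : R) k : 0 <= th ->
  (forall n, 0 <= a n) -> (forall n, 2 * a n.+1 <= a n) ->
  \sum_(n < k) (if a n < th then a n else 0) <= 2 * th.
Proof.
move=> th0 a0 a2.
have partial j : \sum_(n < j) (if a n < th then a n else 0)
    + 2 * (if a j < th then a j else th) <= 2 * th.
  elim: j => [|j IH]; first by rewrite big_ord0 add0r; case: ifP; lra.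
  rewrite big_ord_recr /=; have := a2 j; have := a0 j.+1.
  by move: IH; do 2 case: ifP => ? /=; lra.
by have := partial k; have := a0 k; case: ifP; lra.
Qed.

Definition rising_edge (b : nat -> bool) (n : nat) : bool :=
  b n && (if n is j.+1 then ~~ b j else true).

Lemma sum_rising_edge_le1 (b : nat -> bool) k : (forall n, b n -> b n.+1) ->
  \sum_(n < k) ((rising_edge b n)%:R : R) <= 1.
Proof.
move=> b_up.
have -> : \sum_(n < k) ((rising_edge b n)%:R : R) =
    (if k is j.+1 then b j else false)%:R.
  elim: k => [|[|j] IH]; first by rewrite big_ord0.
    by rewrite big_ord_recr big_ord0 /= add0r /rising_edge andbT.
  rewrite big_ord_recr /= IH /rising_edge.
  by case: (boolP (b j)) => [/b_up -> | _]; rewrite ?addr0 ?add0r ?andbT.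
by case: k => [|j]; [rewrite ler01 | case: (b j); rewrite ?ler01].
Qed.

End DoublingSums.

(* Applied with C = c^p, P n = M_n^p and r n = c^p mu{|g_n| > c}. *)
Section DyadicBookkeeping.
Variables (R : realFieldType) (C : R) (P r : nat -> R).
Hypothesis C_gt0 : 0 < C.
Hypothesis P_gt1 : forall n, 1 < P n.
Hypothesis P_double : forall n, 2 * P n <= P n.+1.
Hypothesis r_le1 : forall n, r n <= 1.
Hypothesis r_le_CP : forall n, r n <= C * P n.
Hypothesis r_succ_le : forall n, 1 <= C * P n -> r n.+1 <= C / P n.
Hypothesis r_eq0 : forall n, P n <= C -> r n = 0.

Let P_gt0 n : 0 < P n. Proof. by have := P_gt1 n; lra. Qed.

Let P_le n m : (n <= m)%N -> P n <= P m.
Proof.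
apply: (homo_leq (r := fun x y : R => x <= y)) => [x|y x z|i]; first exact: lexx.
  exact: le_trans.
by have := P_double i; have := P_gt0 i; lra.
Qed.

Let CP_double n : 2 * (C * P n) <= C * P n.+1.
Proof. by rewrite mulrCA ler_pM2l. Qed.

Let CP_halve n : 2 * (C / P n.+1) <= C / P n.
Proof.
by rewrite mulrCA ler_pM2l // ler_pdivrMr // mulrC ler_pdivlMr.
Qed.

Let CP_ge0 n : 0 <= C * P n. Proof. exact/ltW/mulr_gt0. Qed.
Let CdivP_ge0 n : 0 <= C / P n. Proof. exact/ltW/divr_gt0. Qed.

Lemma sum_le4_small k : C * P 0 < 1 -> \sum_(n < k) r n <= 4.
Proof.
(* r n is at most C P n while C P n < 1, at most 1 at the first n with C P n >= 1,
   and afterwards at most C / P (n-1) < 1/2 (then C < 1 < P 0 and P (n-1) > 2). *)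
move=> CP0.
pose X n := if C * P n < 1 then C * P n else 0.
pose Y n := if n is j.+1 then (if C / P j < 2^-1 then C / P j else 0) else 0.
pose Z n := ((rising_edge (fun m => 1 <= C * P m) n)%:R : R).
have r_le n : r n <= X n + Y n + Z n.
  have Y0 : 0 <= Y n by case: n => //= j; case: ifP.
  have X0 : 0 <= X n by rewrite /X; case: ifP.
  have Z0 : 0 <= Z n := ler0n _ _.
  suff : [\/ r n <= X n, r n <= Y n | r n <= Z n] by case; lra.
  rewrite /X; case: ifP => [CPn|/negbT]; first by apply: Or31; rewrite r_le_CP.
  case: n {X0 Y0 Z0} => [|j]; first by rewrite CP0.
  rewrite -leNgt /Z /rising_edge => /[dup] CPj1 ->.
  case: (leP 1 (C * P j)) => /= CPj; last by apply: Or33; rewrite r_le1.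
  apply: Or32; case: j CPj CPj1 => [/(lt_le_trans CP0)|i CPi _]; first by rewrite ltxx.
  suff -> : C / P i.+1 < 2^-1 by rewrite r_succ_le.
  have := P_double i; have := P_gt1 i; have := P_gt1 0.
  by rewrite ltr_pdivrMr //; nra.
apply: (le_trans (y := \sum_(n < k) (X n + Y n + Z n))).
  by apply: ler_sum => n _; apply: r_le.
rewrite !big_split /=.
have SY : \sum_(n < k) Y n <= 2 * 2^-1.
  case: k => [|k]; first by rewrite big_ord0; lra.
  rewrite big_ord_recl add0r.
  by apply: sum_below_halving _ _ _ _ CdivP_ge0 CP_halve; rewrite invr_ge0.
have SX : \sum_(n < k) X n <= 2 * 1.
  exact: sum_below_doubling _ _ _ ler01 CP_ge0 CP_double.
have SZ : \sum_(n < k) Z n <= 1.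
  apply: sum_rising_edge_le1 => n /le_trans; apply.
  by have := CP_double n; have := CP_ge0 n; lra.
lra.
Qed.

Lemma sum_le4_large k : 1 <= C * P 0 -> \sum_(n < k) r n <= 4.
Proof.
(* r 0 <= 1, and r (n+1) <= C / P n, which is < 1 unless P n <= C; in that case
   r (n+1) vanishes unless n+1 is the first index with P (n+1) > C. *)
move=> CP0.
pose Y n := if C / P n < 1 then C / P n else 0.
pose Z n := ((rising_edge (fun m => C < P m) n)%:R : R).
have r_le j : r j.+1 <= Y j + Z j.+1.
  have Z0 : 0 <= Z j.+1 := ler0n _ _.
  have CPj : 1 <= C * P j.
    by apply: le_trans CP0 _; rewrite ler_pM2l //; apply: P_le.
  have := r_succ_le CPj; rewrite /Y; case: ifP => [_|/negbT]; first lra.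
  rewrite -leNgt ler_pdivlMr // mul1r => PjC.
  have [PC|/r_eq0 ->] := ltP C (P j.+1); last by lra.
  by rewrite /Z /rising_edge /= PC -leNgt PjC /=; have := r_le1 j.+1; lra.
case: k => [|k]; first by rewrite big_ord0.
rewrite big_ord_recl; under eq_bigr do rewrite lift0.
apply: (le_trans (y := 1 + \sum_(j < k) (Y j + Z j.+1))).
  by apply: lerD; [apply: r_le1 | apply: ler_sum => j _; apply: r_le].
rewrite big_split /=.
have SY : \sum_(j < k) Y j <= 2 * 1.
  exact: sum_below_halving _ _ _ ler01 CdivP_ge0 CP_halve.
have SZ : \sum_(j < k) Z j.+1 <= 1.
  have := @sum_rising_edge_le1 R (fun m => C < P m) k.+1.
  rewrite big_ord_recl; under eq_bigr do rewrite lift0.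
  have : 0 <= Z 0 := ler0n _ _.
  suff Pup n : C < P n -> C < P n.+1 by move=> Z0 /(_ Pup); rewrite /Z; lra.
  by move=> /lt_le_trans; apply; have := P_double n; have := P_gt0 n; lra.
lra.
Qed.

Lemma sum_le4 k : \sum_(n < k) r n <= 4.
Proof.
by have [/sum_le4_small|/sum_le4_large] := ltP (C * P 0) 1.
Qed.

End DyadicBookkeeping.

Section Truncation.
Variables (T : Type) (R : realType).
Implicit Types (f : nat -> T -> R) (M : nat -> R) (x : T).

Lemma norm_trunc_le (g : T -> R) (a : R) x : `|trunc g a x| <= `|g x|.
Proof. by rewrite /trunc; case: ifP; rewrite ?normr0. Qed.

Lemma trunc_eq0 (g : T -> R) (a : R) x : ~~ (a^-1 < `|g x| < a) -> trunc g a x = 0.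
Proof. by rewrite /trunc => /negbTE ->. Qed.

Lemma window_le (a b v : R) : 0 < a -> a <= b -> a^-1 < v < a -> b^-1 < v < b.
Proof.
move=> a0 ab /andP[av va]; apply/andP; split; last exact: lt_le_trans va ab.
by apply: le_lt_trans av; rewrite lef_pV2 ?posrE // (lt_le_trans a0).
Qed.

Lemma norm_gseq_le f M n x : `|gseq f M n x| <= `|f n x|.
Proof.
case: n => [|n] /=; first exact: norm_trunc_le.
rewrite /trunc; case: ifP => _; case: ifP => _;
  by rewrite ?subrr ?normr0 ?subr0 ?sub0r ?normrN.
Qed.

Lemma gseq_succ_eq0 f M n x : 0 < M n -> M n <= M n.+1 ->
  (M n)^-1 < `|f n.+1 x| < M n -> gseq f M n.+1 x = 0.
Proof.
move=> M0 Mle win; rewrite /= /trunc win.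
by rewrite (window_le M0 Mle win) subrr.
Qed.

Lemma gseq_neq0_window f M n x : (forall m, 0 < M m) -> (forall m, M m <= M m.+1) ->
  gseq f M n x != 0 -> (M n)^-1 < `|f n x| < M n.
Proof.
move=> M0 Mle; apply: contraNT => nwin.
case: n nwin => [|n] nwin /=; first by rewrite trunc_eq0.
rewrite !trunc_eq0 ?subrr //.
by apply: contra nwin; apply: window_le.
Qed.

End Truncation.

Lemma norm_sum_le_of_disjoint (R : realDomainType) (v : nat -> R) (c : R) k :
  0 <= c -> (forall n m, (n < k)%N -> (m < k)%N -> n <> m -> Num.min `|v n| `|v m| = 0) ->
  (forall n, (n < k)%N -> `|v n| <= c) -> `|\sum_(n < k) v n| <= c.
Proof.
move=> c0; elim: k => [|k IH] disj vc; first by rewrite big_ord0 normr0.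
rewrite big_ord_recr /=.
have [vk0|vk_neq0] := eqVneq (v k) 0.
  by rewrite vk0 addr0 IH // => [n m nk mk|n nk]; [apply: disj | apply: vc]; apply: ltnW.
rewrite big1 ?add0r ?vc // => i _; apply/normr0_eq0.
have ik : (i : nat) <> k by move/eqP; rewrite ltn_eqF.
have := disj i k (ltnW (ltn_ord i)) (ltnSn k) ik.
by rewrite minEle; case: ifP => // _ /eqP; rewrite normr_eq0 (negbTE vk_neq0).
Qed.

Lemma ler_powR2r (R : realType) (q : R) : 0 < q ->
  {in Num.nneg &, {mono (@powR R)^~ q : x y / x <= y}}.
Proof.
move=> q0 x y x0 y0; apply/idP/idP; last exact: ge0_ler_powR (ltW q0) x y x0 y0.
by apply: contraTT; rewrite -!ltNge; apply: gt0_ltr_powR.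
Qed.

Lemma ltr_powR2r (R : realType) (q : R) : 0 < q ->
  {in Num.nneg &, {mono (@powR R)^~ q : x y / x < y}}.
Proof.
move=> q0 x y x0 y0; apply/idP/idP; last exact: gt0_ltr_powR q0 x y x0 y0.
by apply: contraTT; rewrite -!leNgt; apply: ge0_ler_powR (ltW q0) y x y0 x0.
Qed.

Section PowR.
Variables (R : realType) (p : R).
Hypothesis p_gt0 : 0 < p.

Lemma powR_pinvK (x : R) : 0 <= x -> (x `^ p) `^ p^-1 = x.
Proof. by move=> x0; rewrite -powRrM mulfV ?gt_eqF ?powRr1. Qed.

Lemma powR_double (x y : R) : 0 <= x -> 0 <= y ->
  x <= 2 `^ (- p^-1) * y -> 2 * x `^ p <= y `^ p.
Proof.
move=> x0 y0 /(ge0_ler_powR (ltW p_gt0)); rewrite !nnegrE.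
rewrite powRM ?powR_ge0 // -powRrM mulNr mulVf ?gt_eqF // powR_inv1 //.
by rewrite -ler_pdivlMl // => ->; rewrite ?mulr_ge0 ?powR_ge0.
Qed.

Lemma mul_powR_inv_le (t a K : R) : 0 <= t -> 0 <= a -> 0 <= K ->
  (t * a `^ p^-1 <= K `^ p^-1) = (t `^ p * a <= K).
Proof.
move=> t0 a0 K0.
rewrite -[t in LHS]powR_pinvK // -powRM ?powR_ge0 //.
by rewrite ler_powR2r ?invr_gt0 // nnegrE ?mulr_ge0 ?powR_ge0.
Qed.

Lemma powR_mul_le1_of_lt (t a : R) : 0 <= t -> 0 <= a ->
  (forall s, 0 < s -> s < t -> s `^ p * a <= 1) -> t `^ p * a <= 1.
Proof.
move=> t0 a0 le1; rewrite -mul_powR_inv_le // powR1.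
have b0 : 0 <= a `^ p^-1 := powR_ge0 _ _.
apply/unstable.ler_ltP => z z_lt; have [|z0] := leP z 0; first lra.
have b_gt0 : 0 < a `^ p^-1 by nra.
have := le1 (z / a `^ p^-1) (divr_gt0 z0 b_gt0).
rewrite ltr_pdivrMr // -mul_powR_inv_le ?divr_ge0 ?(ltW z0) // powR1.
by rewrite divfK ?gt_eqF //; apply.
Qed.

End PowR.

Section WeakLp.
Context {d : measure_display} {T : measurableType d} {R : realType}.
Variables (mu : {measure set T -> \bar R}) (p : R).
Hypothesis p_gt0 : 0 < p.

Lemma mul_poweR_inv_le (t K : R) (x : \bar R) : 0 < t -> 0 <= K -> (0 <= x)%E ->
  (t%:E * x `^ p^-1 <= (K `^ p^-1)%:E)%E = ((t `^ p)%:E * x <= K%:E)%E.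
Proof.
move=> t0 K0; case: x => [a| |] //; rewrite ?lee_fin => a0.
  by rewrite mul_powR_inv_le // ltW.
by rewrite poweRyr ?invr_neq0 ?gt_eqF // !gt0_muley ?lte_fin ?powR_gt0.
Qed.

Lemma measurable_level_set (g : T -> R) (t : R) : measurable_fun setT g ->
  measurable [set x | t < `|g x|].
Proof.
move=> mg; rewrite -[X in measurable X]setTI.
have mlt : measurable_fun setT (fun x => t < `|g x|).
  apply: measurable_realfun.measurable_fun_ltr; first exact: measurable_cst.
  exact: measurableT_comp (@measurable_realfun.normr_measurable R setT) mg.
exact: mlt measurableT [set true] I.
Qed.

Lemma weakLnorm_le1_level (g : T -> R) (t : R) : (weakLnorm mu p g <= 1)%E -> 0 < t ->
  ((t `^ p)%:E * mu [set x | (t < `|g x|)%R] <= 1)%E.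
Proof.
move=> g1 t0; rewrite -mul_poweR_inv_le ?ler01 // powR1.
by apply: le_trans g1; apply: ereal_sup_ubound; exists t.
Qed.

Lemma weakLnorm_le_level (h : T -> R) (K : R) : 0 <= K ->
  (forall c : R, 0 < c -> ((c `^ p)%:E * mu [set x | (c < `|h x|)%R] <= K%:E)%E) ->
  (weakLnorm mu p h <= (K `^ p^-1)%:E)%E.
Proof.
move=> K0 hK; apply: ge_ereal_sup => _ [c /= c0 <-].
by rewrite mul_poweR_inv_le //; apply: hK.
Qed.

Lemma measurable_trunc (g : T -> R) (a : R) : measurable_fun setT g ->
  measurable_fun setT (trunc g a).
Proof.
move=> mg; rewrite /trunc.
have mnorm : measurable_fun setT (fun x => `|g x|).
  exact: measurableT_comp (@measurable_realfun.normr_measurable R setT) mg.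
apply: measurable_fun_ifT => //.
by apply: measurable_and; apply: measurable_realfun.measurable_fun_ltr.
Qed.

Lemma measurable_gseq (f : nat -> T -> R) (M : nat -> R) n :
  (forall m, measurable_fun setT (f m)) -> measurable_fun setT (gseq f M n).
Proof.
move=> mf; case: n => [|n] /=; first exact: measurable_trunc.
by apply: measurable_realfun.measurable_funB; apply: measurable_trunc.
Qed.

End WeakLp.

Section LevelSets.
Context {d : measure_display} {T : measurableType d} {R : realType}.
Variables (mu : {measure set T -> \bar R}) (p : R) (f : nat -> T -> R) (M : nat -> R).
Hypothesis p_gt0 : 0 < p.
Hypothesis f_meas : forall n, measurable_fun setT (f n).
Hypothesis f_weak : forall n, (weakLnorm mu p (f n) <= 1)%E.
Hypothesis M_gt1 : forall n, 1 < M n.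
Hypothesis M_double : forall n, 2 * M n `^ p <= M n.+1 `^ p.
Variable c : R.
Hypothesis c_gt0 : 0 < c.

Let S n := [set x | (c < `|gseq f M n x|)%R].

Let M_gt0 n : 0 < M n. Proof. by have := M_gt1 n; lra. Qed.
Let M_ge0 n : 0 <= M n. Proof. exact/ltW. Qed.
Let c_ge0 : 0 <= c. Proof. exact/ltW. Qed.

Let M_le n : M n <= M n.+1.
Proof.
rewrite -(ler_powR2r p_gt0 (M_ge0 n) (M_ge0 n.+1)) /=.
by have := M_double n; have := powR_ge0 (M n) p; lra.
Qed.

Let S_meas n : measurable (S n).
Proof. exact/measurable_level_set/measurable_gseq. Qed.

Let level_boundE n (t : R) : 0 < t -> S n `<=` [set x | (t < `|f n x|)%R] ->
  ((t `^ p)%:E * mu (S n) <= 1)%E.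
Proof.
move=> t0 St; apply: le_trans (weakLnorm_le1_level p_gt0 (f_weak n) t0).
rewrite lee_wpmul2l ?lee_fin ?powR_ge0 // le_measure ?inE //.
exact/measurable_level_set.
Qed.

Let S_fin n : mu (S n) = (fine (mu (S n)))%:E.
Proof.
apply/esym/fineK; rewrite ge0_fin_numE ?measure_ge0 // lt_neqAle leey andbT.
apply: contraTN (level_boundE c_gt0 (fun x Sx => lt_le_trans Sx (norm_gseq_le f M n x))).
by move=> /eqP ->; rewrite gt0_muley ?lte_fin ?powR_gt0.
Qed.

Let a n := fine (mu (S n)).

Let a_ge0 n : 0 <= a n. Proof. exact/fine_ge0/measure_ge0. Qed.

Let level_bound n (t : R) : 0 < t -> S n `<=` [set x | (t < `|f n x|)%R] ->
  t `^ p * a n <= 1.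
Proof. by move=> t0 /(level_boundE t0); rewrite S_fin -EFinM lee_fin. Qed.

Let S_window n x : S n x -> (M n)^-1 < `|f n x| < M n.
Proof.
move=> Sx; apply: gseq_neq0_window => //; apply: contraTneq Sx => ->.
by rewrite normr0 -leNgt ltW.
Qed.

Let S_sub n : S n `<=` [set x | (c < `|f n x|)%R].
Proof. by move=> x Sx; apply: lt_le_trans Sx (norm_gseq_le f M n x). Qed.

Lemma level_le1 n : c `^ p * a n <= 1.
Proof. exact: level_bound c_gt0 (@S_sub n). Qed.

Lemma level_le_Mpow n : c `^ p * a n <= c `^ p * M n `^ p.
Proof.
rewrite ler_wpM2l ?powR_ge0 //.
have Mi_gt0 : 0 < (M n)^-1 by rewrite invr_gt0.
have := level_bound Mi_gt0 (fun x Sx => proj1 (andP (S_window Sx))).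
have inv : (M n)^-1 `^ p * M n `^ p = 1.
  by rewrite -powRM ?invr_ge0 // mulVf ?gt_eqF // powR1.
by have := a_ge0 n; have := powR_ge0 (M n) p; nra.
Qed.

Lemma level_succ_le n : 1 <= c `^ p * M n `^ p -> c `^ p * a n.+1 <= c `^ p / M n `^ p.
Proof.
rewrite -powRM // => cMp.
have cM : 1 <= c * M n.
  by rewrite -(ler_powR2r p_gt0) ?nnegrE ?mulr_ge0 //= powR1.
rewrite ler_pdivlMr ?powR_gt0 // -mulrA ler_piMr ?powR_ge0 // mulrC.
(* S (n+1) only lies in the closed level set {M n <= |f (n+1)|}. *)
apply: powR_mul_le1_of_lt => // s s0 sM.
apply: (@level_bound n.+1 s s0) => x Sx /=; apply: lt_le_trans sM _.
rewrite leNgt; apply/negP => fM.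
move: (Sx : c < `|gseq f M n.+1 x|); rewrite gseq_succ_eq0 //.
  by rewrite normr0 ltNge c_ge0.
rewrite fM andbT; apply: le_lt_trans (lt_le_trans Sx (norm_gseq_le f M n.+1 x)).
by rewrite -div1r ler_pdivrMr.
Qed.

Lemma level_eq0 n : M n `^ p <= c `^ p -> c `^ p * a n = 0.
Proof.
rewrite (ler_powR2r p_gt0) ?nnegrE //= => Mc.
rewrite /a; suff -> : S n = set0 by rewrite measure0 mulr0.
apply/seteqP; split=> // x Sx; have /andP[_ fM] := S_window Sx.
by have := S_sub Sx; rewrite /= ltNge (le_trans (ltW fM) Mc).
Qed.

Lemma level_sum_le4 k : c `^ p * \sum_(n < k) a n <= 4.
Proof.
rewrite mulr_sumr.
apply: (sum_le4 (C := c `^ p) (P := fun n => M n `^ p) (r := fun n => c `^ p * a n)).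
- exact: powR_gt0.
- move=> n; have := M_gt1 n.
  by rewrite -(ltr_powR2r p_gt0) ?nnegrE //= powR1.
- exact: M_double.
- exact: level_le1.
- exact: level_le_Mpow.
- exact: level_succ_le.
- exact: level_eq0.
Qed.

Hypothesis f_disj : forall n m, n <> m ->
  {ae mu, forall x, Num.min `|f n x| `|f m x| = 0}.

Let gseq_disj k x :
  (forall i : 'I_k * 'I_k, (i.1 : nat) <> i.2 -> Num.min `|f i.1 x| `|f i.2 x| = 0) ->
  forall n m, (n < k)%N -> (m < k)%N -> n <> m ->
    Num.min `|gseq f M n x| `|gseq f M m x| = 0.
Proof.
move=> disj n m nk mk nm; apply/eqP; rewrite eq_le le_min !normr_ge0 !andbT.
have /= <- := disj (Ordinal nk, Ordinal mk) nm.
exact: le_min2 (norm_gseq_le f M n x) (norm_gseq_le f M m x).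
Qed.

Lemma level_partial_sum_le k :
  (mu [set x | (c < `|\sum_(n < k) gseq f M n x|)%R] <= \sum_(n < k) mu (S n))%E.
Proof.
have disj : {ae mu, forall x, forall i : 'I_k * 'I_k,
    (i.1 : nat) <> i.2 -> Num.min `|f i.1 x| `|f i.2 x| = 0}.
  apply: filter_forall => i; have [e|ne] := eqVneq (i.1 : nat) i.2.
    by apply: filterE => x /(_ e).
  by apply: filterS (f_disj (elimN eqP ne)) => x + _.
have [N [mN N0 notdisj_N]] := disj.
have sub : [set x | (c < `|\sum_(n < k) gseq f M n x|)%R] `<=`
    \big[setU/set0]_(n < k) S n `|` N.
  move=> x cx; have [Nx|Nx] := pselect (N x); [by right | left].
  have disjx : forall i : 'I_k * 'I_k, (i.1 : nat) <> i.2 ->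
      Num.min `|f i.1 x| `|f i.2 x| = 0.
    by apply: contrapT => /notdisj_N.
  rewrite -bigcup_mkord; apply: contrapT => noS; move: cx => /=; apply/negP.
  rewrite -leNgt; apply: (norm_sum_le_of_disjoint (v := fun n => gseq f M n x)) => //.
    exact: gseq_disj.
  by move=> n nk; rewrite leNgt; apply/negP => cn; apply: noS; exists n.
have mU : measurable (\big[setU/set0]_(n < k) S n) by apply: bigsetU_measurable.
apply: le_trans (le_measure _ _ _ sub) _; rewrite ?inE.
- by apply: measurable_level_set; apply: measurable_sum => n; apply: measurable_gseq.
- exact: measurableU.
apply: le_trans (measureU2 mu mU mN) _.
rewrite [X in (_ + X)%E](_ : _ = 0%E) ?adde0; last exact: N0.
exact: Boole_inequality.
Qed.

Lemma level_partial_sum_bound k :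
  ((c `^ p)%:E * mu [set x | (c < `|\sum_(n < k) gseq f M n x|)%R] <= 4%:E)%E.
Proof.
apply: le_trans (lee_wpmul2l _ (level_partial_sum_le k)) _.
  by rewrite lee_fin powR_ge0.
under eq_bigr do rewrite S_fin.
by rewrite sumEFin -EFinM lee_fin level_sum_le4.
Qed.

End LevelSets.

Theorem lemma12 (d : measure_display) (T : measurableType d) (R : realType)
  (mu : {measure set T -> \bar R}) (p : R) (f : nat -> T -> R) (M : nat -> R) :
  1 < p ->
  (forall n, measurable_fun setT (f n)) ->
  (forall n, (weakLnorm mu p (f n) <= 1)%E) ->
  (forall n m, n <> m ->
     {ae mu, forall x, Num.min `|f n x| `|f m x| = 0}) ->
  (forall n, 1 < M n /\ M n <= 2 `^ (- p^-1) * M n.+1) ->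
  forall k : nat, (weakLnorm mu p (fun x => (\sum_(n < k) gseq f M n x)%R) <= 4%:E)%E.
Proof.
move=> p_gt1 f_meas f_weak f_disj M_cond k.
have p_gt0 : 0 < p by lra.
have M_gt1 n : 1 < M n by case: (M_cond n).
have M_double n : 2 * M n `^ p <= M n.+1 `^ p.
  have M_ge0 m : 0 <= M m by have := M_gt1 m; lra.
  by case: (M_cond n) => _; apply: powR_double.
have bound c (c0 : 0 < c) :=
  level_partial_sum_bound p_gt0 f_meas f_weak M_gt1 M_double c0 f_disj k.
apply: le_trans (weakLnorm_le_level p_gt0 _ bound) _; first lra.
by rewrite lee_fin ler1_powR ?invf_le1 ?ler1n ?(ltW p_gt1).
Qed.
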